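(* There exists an NWBTS$(8;b)$ for every $b\ge0$ with $b\equiv 9,10,18,19,27,28,29,37,38,46,47\pmod{56}$.
   Context: A triple system TS$(v;b)$ is a pair $(V,\mathcal F)$, $V$ a set of $v\ge3$ points, $\mathcal F$ a multiset of $b$ 3-subsets (blocks). $\lambda_{x_1,\dots,x_j}$ is the number of blocks containing $\{x_1,\dots,x_j\}$; $j$-balanced means $|\lambda_{x_1,\dots,x_j}-\lambda_{y_1,\dots,y_j}|\le1$ for all $j$-subsets. Associated pair $(\lambda,\varepsilon)$ of $(v,b)$: integers with $3b=\lambda\binom v2+\varepsilon$, $-v/2<\varepsilon<v/2$. (C1): $v\equiv 2\pmod 3$ and $b\in\{\lfloor \lambda v(v-1)/6\rfloor,\lceil \lambda v(v-1)/6\rceil\}$ for an integer $\lambda$ with $\lambda\equiv1,2\pmod 3$ if $v\equiv5\pmod6$ and $\lambda\equiv 2,4\pmod 6$ if $v\equiv2\pmod 6$. (C2): $v$ even and $\lambda v(v-1)/6-v/6<b<\lambda v(v-1)/6+v/6$ for an odd integer $\lambda$. In both, $\lambda$ is that of the associated pair. Defect graph (when all $\lambda_{x,y}\in\{\lambda-1,\lambda,\lambda+1\}$): graph on $V$ with edges the pairs with $\lambda_{x,y}=\lambda+1$ (label $+1$) or $\lambda-1$ (label $-1$); isomorphisms preserve labels. $G_{\pm1}$: triangle with two $\pm1$ edges and one $\mp1$ edge; $G_{\pm2}$: 4-cycle with three $\pm1$ edges and one $\mp1$ edge. For even $v$: $H^0_{v,\varepsilon}$: perfect matching with $(v+2\varepsilon)/4$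 edges $+1$, $(v-2\varepsilon)/4$ edges $-1$; $H^1_{v,\varepsilon}$: disjoint union of a $K_{1,3}$ with two $+1$ and one $-1$ edge and a matching of the other $v-4$ vertices with $(v-6+2\varepsilon)/4$ edges $+1$, $(v-2-2\varepsilon)/4$ edges $-1$; $H^2_{v,\varepsilon}$: disjoint union of a $K_{1,3}$ with one $+1$ and two $-1$ edges and a matching of the other $v-4$ vertices with $(v-2+2\varepsilon)/4$ edges $+1$, $(v-6-2\varepsilon)/4$ edges $-1$. Nearly 2-balanced: all $\lambda_{x,y}\in\{\lambda-1,\lambda,\lambda+1\}$ and defect graph $\cong G_\varepsilon$ under (C1); under (C2) $\cong H^0_{v,\varepsilon}$ if $\varepsilon\equiv v/2\pmod 2$, else $\cong H^1_{v,\varepsilon}$ or $H^2_{v,\varepsilon}$. An NWBTS$(v;b)$ is a nearly 2-balanced, 3-balanced TS$(v;b)$ with $(v,b)$ in (C1) or (C2). (For $v=8$ the listed $b$ are exactly those for which $(8,b)$ satisfies (C1) or (C2).) *)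

From mathcomp Require Import all_boot all_order all_fingroup all_algebra.
Set Implicit Arguments. Unset Strict Implicit. Unset Printing Implicit Defensive.
Import Order.TTheory GRing.Theory Num.Theory.
Local Open Scope ring_scope.

(* A triple system TS(v;b): points 'I_v (v >= 3), a multiset (seq) of b
   blocks, each a 3-subset. *)
Definition is_TS (v b : nat) (F : seq {set 'I_v}) : Prop :=
  (3 <= v)%N /\ size F = b /\ all (fun B : {set 'I_v} => #|B| == 3%N) F.

Definition lam (v : nat) (F : seq {set 'I_v}) (S : {set 'I_v}) : nat :=
  count (fun B : {set 'I_v} => S \subset B) F.

Definition j_balanced (v : nat) (F : seq {set 'I_v}) (j : nat) : Prop :=
  forall S T : {set 'I_v}, #|S| = j -> #|T| = j ->
    (lam F S <= (lam F T).+1)%N.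

Definition assoc_pair (v b : nat) (l e : int) : Prop :=
  (3 * b%:Z = l * ('C(v, 2))%:Z + e) /\ (- v%:Z < 2 * e) /\ (2 * e < v%:Z).

Definition C1 (v b : nat) (l : int) : Prop :=
  (v %% 3 = 2)%N /\
  (b%:Z = ((l * (v * (v - 1))%:Z) %/ 6)%Z \/
   b%:Z = - (((- (l * (v * (v - 1))%:Z)) %/ 6)%Z)) /\
  (if (v %% 6 == 5)%N then (l %% 3)%Z \in [:: 1; 2]
   else (l %% 6)%Z \in [:: 2; 4]).

(* Condition (C2): v even, lambda odd,
   l v(v-1)/6 - v/6 < b < l v(v-1)/6 + v/6 (multiplied by 6) *)
Definition C2 (v b : nat) (l : int) : Prop :=
  ~~ odd v /\ (l %% 2)%Z = 1 /\
  l * (v * (v - 1))%:Z - v%:Z < 6 * b%:Z /\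
  6 * b%:Z < l * (v * (v - 1))%:Z + v%:Z.

(* Labelled graphs on 'I_v: functions giving the label (-1, 0 = no edge, +1)
   of each pair of distinct vertices. The defect graph: *)
Definition defect (v : nat) (F : seq {set 'I_v}) (l : int) (x y : 'I_v) : int :=
  (lam F [set x; y])%:Z - l.

Definition defect_iso (v : nat) (F : seq {set 'I_v}) (l : int)
  (g : nat -> nat -> int) : Prop :=
  exists s : {perm 'I_v}, forall x y : 'I_v, x != y ->
    defect F l (s x) (s y) = g (nat_of_ord x) (nat_of_ord y).

(* G_{s}: triangle 0-1-2, edges {0,1},{1,2} labelled s, {0,2} labelled -s *)
Definition Gtri (s : int) (x y : nat) : int :=
  let a := minn x y in let c := maxn x y in
  if ((a == 0) && (c == 1))%N || ((a == 1) && (c == 2))%N then s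
  else if ((a == 0) && (c == 2))%N then - s else 0.

(* G_{2s}: 4-cycle 0-1-2-3-0, {0,1},{1,2},{2,3} labelled s, {0,3} labelled -s *)
Definition Gcyc (s : int) (x y : nat) : int :=
  let a := minn x y in let c := maxn x y in
  if ((a == 0) && (c == 1))%N || ((a == 1) && (c == 2))%N
     || ((a == 2) && (c == 3))%N then s
  else if ((a == 0) && (c == 3))%N then - s else 0.

(* perfect matching on vertices o, o+1, ...: edges {o+2i, o+2i+1};
   the first p of them labelled +1, the others -1 *)
Definition matching (o p : nat) (x y : nat) : int :=
  let a := minn x y in let c := maxn x y in
  if [&& (o <= a)%N, c == a.+1 & ~~ odd (a - o)] then
    (if ((a - o)./2 < p)%N then 1 else -1)
  else 0.

Definition H0 (p : nat) := matching 0 p.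

(* K_{1,3} with centre 0, leaves 1,2,3: {0,1} +1, {0,2} t, {0,3} -1;
   plus matching on 4..v-1 with p edges labelled +1 *)
Definition Hstar (t : int) (p : nat) (x y : nat) : int :=
  let a := minn x y in let c := maxn x y in
  if ((a == 0) && (c == 1))%N then 1
  else if ((a == 0) && (c == 2))%N then t
  else if ((a == 0) && (c == 3))%N then -1
  else matching 4 p x y.

Definition H1 := Hstar 1.
Definition H2 := Hstar (-1).

Definition defect_C1 (v : nat) (F : seq {set 'I_v}) (l e : int) : Prop :=
  exists2 s : int, s \in [:: 1; -1] &
    ((e = s /\ defect_iso F l (Gtri s)) \/
     (e = 2 * s /\ defect_iso F l (Gcyc s))).

Definition defect_C2 (v : nat) (F : seq {set 'I_v}) (l e : int) : Prop :=
  if (2 %| (e - (v./2)%:Z))%Z then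
    exists p m : nat, 4 * p%:Z = v%:Z + 2 * e /\ 4 * m%:Z = v%:Z - 2 * e /\
      defect_iso F l (H0 p)
  else
    (exists p m : nat, 4 * p%:Z = v%:Z - 6 + 2 * e /\
       4 * m%:Z = v%:Z - 2 - 2 * e /\ defect_iso F l (H1 p)) \/
    (exists p m : nat, 4 * p%:Z = v%:Z - 2 + 2 * e /\
       4 * m%:Z = v%:Z - 6 - 2 * e /\ defect_iso F l (H2 p)).

Definition pair_range (v : nat) (F : seq {set 'I_v}) (l : int) : Prop :=
  forall x y : 'I_v, x != y -> defect F l x y \in [:: -1; 0; 1].

Definition NWBTS (v b : nat) (F : seq {set 'I_v}) : Prop :=
  is_TS b F /\ j_balanced F 3 /\
  exists l e : int, assoc_pair v b l e /\ pair_range F l /\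
    ((C1 v b l /\ defect_C1 F l e) \/ (C2 v b l /\ defect_C2 F l e)).
Arguments NWBTS : clear implicits.

From mathcomp Require Import all_boot all_order all_fingroup all_algebra.
From mathcomp Require Import zify.
Import Order.TTheory GRing.Theory Num.Theory.

Set Implicit Arguments. Unset Strict Implicit. Unset Printing Implicit Defensive.
Local Open Scope ring_scope.

(* Let D be the complete design on 8 points, i.e. all 56
   3-subsets: every pair lies in exactly 6 of its blocks and every triple in
   exactly 1.  Adding a copy of D to a triple system on 8 points therefore
   adds 56 blocks, raises every pair count by 6 and every triple count by 1,
   so the defect graph (relative to lambda + 6) and the 3-balance are
   unchanged, while the associated pair of (8, b) moves to (lambda + 6, eps)
   and the conditions (C1)/(C2) are preserved.  Hence an NWBTS(8;r) yields
   an NWBTS(8;r + 56k) for every k, and it suffices to exhibit one NWBTS(8;r)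
   for each of the eleven residues r in the statement. *)

(* A block is given by a triple of point labels; it is proper when the three
   labels are distinct points of 'I_8. *)
Definition triple := (nat * nat * nat)%type.

Definition on_triple (t : triple) (x : nat) : bool :=
  [|| x == t.1.1, x == t.1.2 | x == t.2]%N.

Definition proper_triple (t : triple) : bool :=
  [&& (t.1.1 < 8)%N, (t.1.2 < 8)%N, (t.2 < 8)%N, t.1.1 != t.1.2,
      t.1.2 != t.2 & t.1.1 != t.2].

Definition block (t : triple) : {set 'I_8} :=
  [set inord t.1.1; inord t.1.2; inord t.2].

Definition count2 (L : seq triple) (a b : nat) : nat :=
  count (fun t => on_triple t a && on_triple t b) L.

Definition count3 (L : seq triple) (a b c : nat) : nat :=
  count (fun t => [&& on_triple t a, on_triple t b & on_triple t c]) L.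

Lemma eq_inord n (x : 'I_n.+1) (a : nat) :
  (a < n.+1)%N -> (x == inord a) = (val x == a).
Proof. by move=> ha; rewrite -(inj_eq val_inj) /= inordK. Qed.

Lemma in_block t (x : 'I_8) : proper_triple t -> (x \in block t) = on_triple t x.
Proof.
case: t => [[a b] c] /= /and5P [ha hb hc _ _].
by rewrite /block /on_triple !inE /= !eq_inord // orbA.
Qed.

Lemma card_block t : proper_triple t -> #|block t| = 3%N.
Proof.
case: t => [[a b] c] /= /and5P [ha hb hc hab /andP [hbc hac]].
rewrite /block /= -setUA cardsU1 cards2 in_set2 !eq_inord //= !inordK //.
by rewrite (negbTE hab) (negbTE hac) hbc.
Qed.

Lemma card_blocks L : all proper_triple L ->
  all (fun B : {set 'I_8} => #|B| == 3%N) (map block L).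
Proof.
by move=> hL; rewrite all_map; apply/allP => t /(allP hL) ht /=; rewrite card_block.
Qed.

Lemma lam_pair_blocks L (x y : 'I_8) : all proper_triple L ->
  lam (map block L) [set x; y] = count2 L x y.
Proof.
move=> hL; rewrite /lam count_map /count2.
apply: eq_in_count => t /(allP hL) ht /=.
by rewrite subUset !sub1set !in_block.
Qed.

Lemma lam_triple_blocks (S : {set 'I_8}) : #|S| = 3%N ->
  exists x y z : 'I_8, [/\ val x != val y, val y != val z & val z != val x] /\
    forall L, all proper_triple L -> lam (map block L) S = count3 L x y z.
Proof.
move=> hS; have : (2 < #|S|)%N by rewrite hS.
case/card_gt2P => x [y [z [[xS yS zS] [xy yz zx]]]].
exists x, y, z; split; first by rewrite !(inj_eq val_inj) xy yz zx.
have -> : S = [set x; y; z].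
  apply/eqP; rewrite eq_sym eqEcard hS; apply/andP; split.
    by apply/subsetP => u; rewrite !inE => /orP [/orP [] | ] /eqP ->.
  by rewrite -setUA cardsU1 cards2 in_set2 negb_or yz (eq_sym x z) zx xy.
move=> L hL; rewrite /lam count_map /count3.
apply: eq_in_count => t /(allP hL) ht /=.
by rewrite !subUset !sub1set !in_block // andbA.
Qed.

Definition pair_cert (L : seq triple) (g : nat -> nat -> int) (l : int) : bool :=
  all (fun a => all (fun b => (a != b) ==>
     (((count2 L a b)%:Z - l == g a b) && (g a b \in [:: -1; 0; 1])))
   (iota 0 8)) (iota 0 8).

Definition triple_cert (L : seq triple) (P : nat -> bool) : bool :=
  all (fun a => all (fun b => all (fun c =>
     [&& a != b, b != c & c != a] ==> P (count3 L a b c))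
   (iota 0 8)) (iota 0 8)) (iota 0 8).

Lemma in_iota8 (x : 'I_8) : val x \in iota 0 8.
Proof. by rewrite mem_iota ltn_ord. Qed.

Lemma pair_certP L g l (x y : 'I_8) : pair_cert L g l -> x != y ->
  ((count2 L x y)%:Z - l = g x y) /\ (g x y \in [:: -1; 0; 1]).
Proof.
move=> /allP /(_ _ (in_iota8 x)) /allP /(_ _ (in_iota8 y)) + xy.
by rewrite (inj_eq val_inj) xy /= => /andP [/eqP -> ->].
Qed.

Lemma triple_certP L P (x y z : 'I_8) : triple_cert L P ->
  [/\ val x != val y, val y != val z & val z != val x] -> P (count3 L x y z).
Proof.
move=> /allP /(_ _ (in_iota8 x)) /allP /(_ _ (in_iota8 y)).
move=> /allP /(_ _ (in_iota8 z)) + [hxy hyz hzx].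
by rewrite hxy hyz hzx.
Qed.

Definition all_triples : seq triple :=
  [seq t <- [seq (ab, c) | ab <- [seq (a, b) | a <- iota 0 8, b <- iota 0 8],
                           c <- iota 0 8]
   | (t.1.1 < t.1.2 < t.2)%N].

Definition complete_design : seq {set 'I_8} := map block all_triples.

Lemma all_triples_proper : all proper_triple all_triples.
Proof. by vm_compute. Qed.

Lemma size_complete_design : size complete_design = 56%N.
Proof. by rewrite size_map; vm_compute. Qed.

Lemma card_complete_design :
  all (fun B : {set 'I_8} => #|B| == 3%N) complete_design.
Proof. exact: card_blocks all_triples_proper. Qed.

Lemma complete_design_pair (x y : 'I_8) : x != y ->
  lam complete_design [set x; y] = 6%N.
Proof.
move=> xy; rewrite lam_pair_blocks; last exact: all_triples_proper.
have cert : pair_cert all_triples (fun _ _ => 0) 6 by vm_compute.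
by have [/eqP + _] := pair_certP cert xy; rewrite subr_eq0 => /eqP [].
Qed.

Lemma complete_design_triple (S : {set 'I_8}) : #|S| = 3%N ->
  lam complete_design S = 1%N.
Proof.
move=> /lam_triple_blocks [x [y [z [dxyz ->]]]]; last exact: all_triples_proper.
have cert : triple_cert all_triples (fun n => n == 1)%N by vm_compute.
exact/eqP/(triple_certP cert dxyz).
Qed.

Lemma lam_add_copies v (F D : seq {set 'I_v}) k (S : {set 'I_v}) :
  lam (F ++ flatten (nseq k D)) S = (lam F S + k * lam D S)%N.
Proof. by rewrite /lam count_cat count_flatten map_nseq sumn_nseq mulnC. Qed.

Lemma size_add_copies (T : Type) (F D : seq T) k :
  size (F ++ flatten (nseq k D)) = (size F + k * size D)%N.
Proof. by rewrite size_cat size_flatten /shape map_nseq sumn_nseq mulnC. Qed.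

Lemma all_add_copies (T : Type) (a : pred T) (F D : seq T) k :
  all a F -> all a D -> all a (F ++ flatten (nseq k D)).
Proof. by move=> hF hD; rewrite all_cat hF; elim: k => //= k IH; rewrite all_cat hD. Qed.

Lemma assoc_pair_shift r k (l e : int) :
  assoc_pair 8 r l e -> assoc_pair 8 (r + k * 56) (l + (6 * k)%:Z) e.
Proof. by rewrite /assoc_pair (_ : 'C(8, 2) = 28%N) //; lia. Qed.

Lemma C1_shift r k (l : int) : C1 8 r l -> C1 8 (r + k * 56) (l + (6 * k)%:Z).
Proof.
move=> [h8 [hr hl]]; split=> //; split; first by case: hr => hr; [left | right]; lia.
by have -> : ((l + (6 * k)%:Z) %% 6)%Z = (l %% 6)%Z by lia.
Qed.

Lemma C2_shift r k (l : int) : C2 8 r l -> C2 8 (r + k * 56) (l + (6 * k)%:Z).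
Proof. by rewrite /C2; lia. Qed.

Lemma defect_C1_mono v (F F' : seq {set 'I_v}) (l l' e : int) :
  (forall g, defect_iso F l g -> defect_iso F' l' g) ->
  defect_C1 F l e -> defect_C1 F' l' e.
Proof.
by move=> hiso [s hs [[-> /hiso iso] | [-> /hiso iso]]]; exists s => //; [left | right].
Qed.

Lemma defect_C2_mono v (F F' : seq {set 'I_v}) (l l' e : int) :
  (forall g, defect_iso F l g -> defect_iso F' l' g) ->
  defect_C2 F l e -> defect_C2 F' l' e.
Proof.
rewrite /defect_C2 => hiso; case: ifP => _.
  by case=> p [m [hp [hm /hiso iso]]]; exists p, m.
by case=> [[p [m [hp [hm /hiso iso]]]] | [p [m [hp [hm /hiso iso]]]]];
  [left | right]; exists p, m.
Qed.

Lemma NWBTS_add_complete r k (F : seq {set 'I_8}) :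
  NWBTS 8 r F -> NWBTS 8 (r + k * 56) (F ++ flatten (nseq k complete_design)).
Proof.
move=> [[h3 [hsize hcard]] [hbal [l [e [hpair [hrange hC]]]]]].
set F' := F ++ _.
have hdefect (x y : 'I_8) : x != y ->
    defect F' (l + (6 * k)%:Z) x y = defect F l x y.
  by move=> xy; rewrite /defect lam_add_copies complete_design_pair //; lia.
have hiso g : defect_iso F l g -> defect_iso F' (l + (6 * k)%:Z) g.
  case=> s hs; exists s => x y xy.
  by rewrite hdefect ?(inj_eq perm_inj) ?hs.
split; first split => //; split.
- by rewrite size_add_copies hsize size_complete_design.
- exact: all_add_copies hcard card_complete_design.
- move=> S T hS hT; rewrite !lam_add_copies !complete_design_triple //.
  by have := hbal S T hS hT; lia.
exists (l + (6 * k)%:Z), e; split; first exact: assoc_pair_shift.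
split; first by move=> x y xy; rewrite hdefect // hrange.
case: hC => [[c1 d] | [c2 d]]; [left | right]; split.
- exact: C1_shift.
- exact: defect_C1_mono d.
- exact: C2_shift.
- exact: defect_C2_mono d.
Qed.

Lemma NWBTS_of_certificates L (l e : int) g :
  all proper_triple L -> triple_cert L (fun n => n <= 1)%N ->
  pair_cert L g l -> assoc_pair 8 (size L) l e ->
  (defect_iso (map block L) l g ->
     (C1 8 (size L) l /\ defect_C1 (map block L) l e) \/
     (C2 8 (size L) l /\ defect_C2 (map block L) l e)) ->
  NWBTS 8 (size L) (map block L).
Proof.
move=> hL htrip hpair hassoc hC.
have hdefect (x y : 'I_8) : x != y -> defect (map block L) l x y = g x y.
  by move=> xy; rewrite /defect lam_pair_blocks //; case: (pair_certP hpair xy).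
split; first by split; rewrite ?size_map ?card_blocks.
split.
  move=> S T /lam_triple_blocks [x [y [z [dS hS]]]].
  move=> /lam_triple_blocks [x' [y' [z' [dT hT]]]].
  rewrite hS // hT //.
  by have := triple_certP htrip dS; have := triple_certP htrip dT; lia.
exists l, e; split => //; split.
  by move=> x y xy; rewrite hdefect //; case: (pair_certP hpair xy).
by apply: hC; exists 1%g => x y xy; rewrite !perm1 hdefect.
Qed.

Definition base_blocks9 : seq triple :=
  [:: (0,1,2); (0,1,4); (0,2,6); (0,5,7); (1,3,7); (1,5,6); (2,3,5); (2,4,7);
    (3,4,6)].

Lemma base9_NWBTS : NWBTS 8 9 (map block base_blocks9).
Proof.
apply: (@NWBTS_of_certificates _ 1 (-1) (H1 0)) => [||||iso].
1-4: by vm_compute.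
right; split; first by [].
rewrite /defect_C2 (_ : (2 %| _)%Z = false) //; left; by exists 0%N, 2%N.
Qed.

Definition base_blocks10 : seq triple :=
  [:: (0,1,2); (2,3,4); (2,3,6); (2,5,7); (0,3,5); (1,3,7); (0,4,7); (0,1,6);
    (1,4,5); (4,5,6)].

Lemma base10_NWBTS : NWBTS 8 10 (map block base_blocks10).
Proof.
apply: (@NWBTS_of_certificates _ 1 2 (H0 3)) => [||||iso].
1-4: by vm_compute.
right; split; first by [].
rewrite /defect_C2 (_ : (2 %| _)%Z) //; by exists 3%N, 1%N.
Qed.

Definition base_blocks18 : seq triple :=
  [:: (0,1,3); (0,2,3); (0,2,4); (0,3,5); (0,4,6); (0,5,7); (0,6,7); (2,4,5);
    (1,2,6); (2,5,7); (2,6,7); (1,3,7); (1,4,5); (1,5,6); (1,4,7); (3,4,6);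
    (3,4,7); (3,5,6)].

Lemma base18_NWBTS : NWBTS 8 18 (map block base_blocks18).
Proof.
apply: (@NWBTS_of_certificates _ 2 (-2) (Gcyc (-1))) => [||||iso].
1-4: by vm_compute.
left; split; first by split; [|split; [left|]].
by exists (-1); last right.
Qed.

Definition base_blocks19 : seq triple :=
  [:: (0,1,2); (0,1,3); (0,1,4); (0,3,5); (0,4,6); (0,5,7); (0,6,7); (1,2,3);
    (1,4,5); (1,2,6); (1,5,7); (1,6,7); (2,3,7); (2,4,5); (2,5,6); (2,4,7);
    (3,4,6); (3,4,7); (3,5,6)].

Lemma base19_NWBTS : NWBTS 8 19 (map block base_blocks19).
Proof.
apply: (@NWBTS_of_certificates _ 2 1 (Gtri 1)) => [||||iso].
1-4: by vm_compute.
left; split; first by split; [|split; [right|]].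
by exists 1; last left.
Qed.

Definition base_blocks27 : seq triple :=
  [:: (0,1,2); (0,1,3); (0,1,4); (0,1,5); (0,2,6); (0,3,7); (0,4,5); (0,4,6);
    (0,5,7); (0,6,7); (1,2,6); (1,3,6); (1,4,6); (1,2,7); (1,3,5); (1,4,7);
    (1,5,7); (2,3,4); (2,3,5); (2,3,7); (2,4,5); (3,4,6); (2,4,7); (2,5,6);
    (3,4,7); (3,5,6); (5,6,7)].

Lemma base27_NWBTS : NWBTS 8 27 (map block base_blocks27).
Proof.
apply: (@NWBTS_of_certificates _ 3 (-3) (H2 0)) => [||||iso].
1-4: by vm_compute.
right; split; first by [].
rewrite /defect_C2 (_ : (2 %| _)%Z = false) //; right; by exists 0%N, 2%N.
Qed.

Definition base_blocks28 : seq triple :=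
  [:: (0,1,2); (0,1,3); (0,1,4); (0,1,5); (0,2,6); (0,3,6); (0,4,6); (0,2,7);
    (0,3,5); (0,4,7); (0,5,7); (1,2,3); (2,3,4); (2,3,5); (2,3,6); (1,3,7);
    (1,4,6); (1,5,6); (1,6,7); (3,4,5); (3,4,7); (3,6,7); (2,5,6); (4,5,6);
    (1,2,4); (1,5,7); (2,4,7); (2,5,7)].

Lemma base28_NWBTS : NWBTS 8 28 (map block base_blocks28).
Proof.
apply: (@NWBTS_of_certificates _ 3 0 (H0 2)) => [||||iso].
1-4: by vm_compute.
right; split; first by [].
rewrite /defect_C2 (_ : (2 %| _)%Z) //; by exists 2%N, 2%N.
Qed.

Definition base_blocks29 : seq triple :=
  [:: (0,1,2); (0,1,3); (0,1,4); (0,1,5); (0,2,3); (0,2,6); (0,4,6); (0,5,6);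
    (0,2,7); (0,4,7); (0,5,7); (1,4,5); (2,4,5); (3,4,5); (4,5,6); (1,6,7);
    (2,6,7); (3,6,7); (4,6,7); (1,2,6); (1,3,6); (3,5,6); (1,2,4); (1,3,7);
    (1,5,7); (2,3,5); (2,5,7); (2,3,4); (3,4,7)].

Lemma base29_NWBTS : NWBTS 8 29 (map block base_blocks29).
Proof.
apply: (@NWBTS_of_certificates _ 3 3 (H1 2)) => [||||iso].
1-4: by vm_compute.
right; split; first by [].
rewrite /defect_C2 (_ : (2 %| _)%Z = false) //; left; by exists 2%N, 0%N.
Qed.

Definition base_blocks37 : seq triple :=
  [:: (0,1,2); (0,2,3); (0,2,4); (0,2,5); (0,2,6); (0,1,7); (0,3,7); (0,4,7);
    (0,5,7); (0,1,6); (0,3,4); (0,3,5); (0,4,6); (0,5,6); (1,2,3); (1,3,4);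
    (1,3,5); (1,3,6); (1,2,4); (1,4,5); (1,5,6); (1,5,7); (1,4,7); (1,6,7);
    (2,3,7); (2,4,7); (2,5,7); (2,6,7); (2,4,5); (2,3,6); (2,5,6); (3,4,6);
    (4,5,6); (3,4,5); (3,5,7); (3,6,7); (4,6,7)].

Lemma base37_NWBTS : NWBTS 8 37 (map block base_blocks37).
Proof.
apply: (@NWBTS_of_certificates _ 4 (-1) (Gtri (-1))) => [||||iso].
1-4: by vm_compute.
left; split; first by split; [|split; [left|]].
by exists (-1); last left.
Qed.

Definition base_blocks38 : seq triple :=
  [:: (0,1,2); (0,1,3); (0,1,4); (0,1,5); (0,1,6); (0,2,7); (0,3,7); (0,4,7);
    (0,5,7); (0,2,6); (0,3,6); (1,2,3); (2,3,4); (2,3,5); (2,3,6); (2,3,7);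
    (0,2,4); (0,4,5); (0,5,6); (1,2,4); (1,2,5); (1,2,6); (1,3,7); (1,4,7);
    (1,5,7); (1,6,7); (2,4,5); (2,5,7); (2,6,7); (1,4,6); (1,3,5); (3,4,5);
    (3,4,6); (3,4,7); (3,5,6); (4,5,6); (4,6,7); (5,6,7)].

Lemma base38_NWBTS : NWBTS 8 38 (map block base_blocks38).
Proof.
apply: (@NWBTS_of_certificates _ 4 2 (Gcyc 1)) => [||||iso].
1-4: by vm_compute.
left; split; first by split; [|split; [right|]].
by exists 1; last right.
Qed.

Definition base_blocks46 : seq triple :=
  [:: (0,1,2); (0,1,3); (0,1,4); (0,1,5); (0,1,6); (0,1,7); (0,2,3); (0,2,4);
    (0,2,5); (0,2,6); (0,3,7); (0,4,7); (0,5,7); (0,6,7); (1,2,7); (2,3,7);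
    (2,4,7); (2,5,7); (2,6,7); (0,3,4); (0,3,5); (0,4,6); (0,5,6); (1,3,6);
    (2,3,6); (3,4,6); (3,5,6); (3,6,7); (1,2,3); (1,2,4); (2,4,5); (2,4,6);
    (1,2,5); (1,4,6); (1,5,6); (1,6,7); (2,5,6); (1,3,4); (3,4,5); (3,4,7);
    (1,3,5); (1,4,7); (1,5,7); (3,5,7); (4,5,6); (4,5,7)].

Lemma base46_NWBTS : NWBTS 8 46 (map block base_blocks46).
Proof.
apply: (@NWBTS_of_certificates _ 5 (-2) (H0 1)) => [||||iso].
1-4: by vm_compute.
right; split; first by [].
rewrite /defect_C2 (_ : (2 %| _)%Z) //; by exists 1%N, 3%N.
Qed.

Definition base_blocks47 : seq triple :=
  [:: (0,1,2); (0,1,3); (0,1,4); (0,1,5); (0,1,6); (0,1,7); (0,2,3); (0,2,4);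
    (0,2,5); (0,2,6); (0,2,7); (0,4,5); (1,4,5); (2,4,5); (3,4,5); (4,5,6);
    (4,5,7); (0,3,4); (0,4,6); (0,3,7); (0,5,6); (0,5,7); (0,6,7); (1,3,5);
    (2,3,5); (3,5,6); (3,5,7); (1,3,6); (2,3,6); (3,4,6); (3,6,7); (1,4,7);
    (2,4,7); (3,4,7); (4,6,7); (1,2,3); (1,2,4); (1,2,6); (1,2,7); (1,5,6);
    (1,5,7); (2,5,6); (2,5,7); (1,3,4); (1,6,7); (2,3,7); (2,4,6)].

Lemma base47_NWBTS : NWBTS 8 47 (map block base_blocks47).
Proof.
apply: (@NWBTS_of_certificates _ 5 1 (H1 1)) => [||||iso].
1-4: by vm_compute.
right; split; first by [].
rewrite /defect_C2 (_ : (2 %| _)%Z = false) //; left; by exists 1%N, 1%N.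
Qed.

Lemma base_systems r :
  r \in [:: 9; 10; 18; 19; 27; 28; 29; 37; 38; 46; 47]%N ->
  exists F : seq {set 'I_8}, NWBTS 8 r F.
Proof.
rewrite !inE => hr.
repeat case/orP: hr => [/eqP -> | hr]; last move/eqP: hr => ->.
all: eexists; solve [exact: base9_NWBTS | exact: base10_NWBTS
  | exact: base18_NWBTS | exact: base19_NWBTS | exact: base27_NWBTS
  | exact: base28_NWBTS | exact: base29_NWBTS | exact: base37_NWBTS
  | exact: base38_NWBTS | exact: base46_NWBTS | exact: base47_NWBTS].
Qed.

Theorem lemmaA3 (b : nat) :
  (b %% 56)%N \in [:: 9; 10; 18; 19; 27; 28; 29; 37; 38; 46; 47]%N ->
  exists F : seq {set 'I_8}, NWBTS 8 b F.
Proof.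
move=> /base_systems [F hF].
exists (F ++ flatten (nseq (b %/ 56) complete_design)).
by rewrite [X in NWBTS 8 X](divn_eq b 56) addnC; apply: NWBTS_add_complete.
Qed.
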